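(* Let $D$ be a Euclidean domain with fraction field $K$, and let $R(D)$ be the subring of $K$ generated by the set $\{1/d \mid d \in D\setminus\{0\}\}$. Suppose $D$ is not Egyptian. Then $R(D)$ is a discrete valuation ring (of rank one, not a field), and the set consisting of the units of $D$ together with $0$ is a field.
   Context: A Euclidean function on an integral domain $D$ is a function $f: D\setminus\{0\} \to \mathbb{Z}$ such that for all nonzero $a,b \in D$: (1) $f(ab) \geq f(a)$, and (2) there exist $q,r \in D$ with $b = aq + r$ and either $r=0$ or $f(r) < f(a)$. A Euclidean domain is an integral domain admitting a Euclidean function. An element of $K$ is called $D$-Egyptian if it is a sum of reciprocals of distinct nonzero elements of $D$. The domain $D$ is called Egyptian if every nonzero element of $K$ is $D$-Egyptian. *)

From HB Require Import structures.
From mathcomp Require Import all_boot all_order all_algebra fraction.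
Set Implicit Arguments. Unset Strict Implicit. Unset Printing Implicit Defensive.
Import Order.TTheory GRing.Theory Num.Theory.
Local Open Scope ring_scope.
Notation tofrac := (@FracField.tofrac _).
Local Notation "x %:F" := (tofrac x) (format "x %:F").


(* f : D -> int is a Euclidean function (its values at 0 are irrelevant). *)
Definition euclidean_function (D : idomainType) (f : D -> int) : Prop :=
  forall a b : D, a != 0 -> b != 0 ->
    f a <= f (a * b) /\
    exists q r : D, b = a * q + r /\ (r = 0 \/ f r < f a).

Definition is_euclidean (D : idomainType) : Prop :=
  exists f : D -> int, euclidean_function f.

Definition D_egyptian (D : idomainType) (x : {fraction D}) : Prop :=
  exists s : seq D, uniq s /\ all (fun d => d != 0) s /\
    x = \sum_(d <- s) (d%:F)^-1.

Definition egyptian (D : idomainType) : Prop :=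
  forall x : {fraction D}, x != 0 -> D_egyptian x.

Definition RD (D : idomainType) (x : {fraction D}) : Prop :=
  forall S : {pred {fraction D}}, subring_closed S ->
    (forall d : D, d != 0 -> (d%:F)^-1 \in S) -> x \in S.

Definition discrete_valuation (K : fieldType) (v : K -> int) : Prop :=
  [/\ forall x y : K, x != 0 -> y != 0 -> v (x * y) = v x + v y,
      forall x y : K, x != 0 -> y != 0 -> x + y != 0 ->
        Num.min (v x) (v y) <= v (x + y)
    & forall n : int, exists2 x : K, x != 0 & v x = n].

Definition is_DVR_in (K : fieldType) (R : K -> Prop) : Prop :=
  exists v : K -> int, discrete_valuation v /\
    forall x : K, R x <-> (x = 0 \/ 0 <= v x).

Definition units0 (D : idomainType) : {pred D} :=
  fun x => (x \is a GRing.unit) || (x == 0).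

From HB Require Import structures.
From mathcomp Require Import all_boot all_order all_algebra fraction zify ring lra.
From mathcomp Require Import boolp.
Import Order.TTheory GRing.Theory Num.Theory.
Local Open Scope ring_scope.
Set Implicit Arguments. Unset Strict Implicit. Unset Printing Implicit Defensive.
Local Notation "x %:F" := (tofrac x) (format "x %:F").

(* Let d be a nonunit of D of least Euclidean size, so that every remainder modulo d is a
   unit or 0. If some nonzero nonunit m of D lay in R(D), dividing powers of m by arbitrary
   elements would put all of D, hence all of K, into R(D). Every element of K would then be
   a sum of unit fractions, and such a sum can always be rewritten with distinct
   denominators: merge 1/a + 1/a = 2/a when 2 is 0 or a unit, and otherwise (characteristic
   0) use that 1 is a sum of distinct unit fractions with arbitrarily large natural
   denominators. So D would be Egyptian. Hence the elements of D lying in R(D) are exactly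
   the units and 0, which makes the units together with 0 a field. Moreover 1/d lies in
   R(D) but d does not, and dividing by d shows that every nonzero b in D is a unit of R(D)
   times a power of d. So every nonzero element of K is a unit of R(D) times an integral
   power of 1/d: R(D) is a discrete valuation ring with uniformizer 1/d. *)

Section RingOfReciprocals.
Variable D : idomainType.
Local Notation K := {fraction D}.

Lemma fracP (x : K) : exists a b : D, b != 0 /\ x = a%:F / b%:F.
Proof.
elim/quotW: x => r; exists \n_r, \d_r; split; first exact: denom_ratioP.
unlock FracField.tofrac.
rewrite -[RHS]/(FracField.mul (\pi_K%qT (Ratio \n_r 1))
                              (FracField.inv (\pi_K%qT (Ratio \d_r 1)))).
rewrite -FracField.pi_inv -FracField.pi_mul /FracField.mulf /FracField.invf /=.
have dn := denom_ratioP r.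
by rewrite !(numer_Ratio, denom_Ratio) ?oner_neq0 // mulr1 mul1r Ratio_numden.
Qed.

Lemma RD1 : RD (1 : K).
Proof. by move=> S [S1 _ _]. Qed.

Lemma RDB (x y : K) : RD x -> RD y -> RD (x - y).
Proof.
by move=> Rx Ry S SS Sinv; case: (SS) => _ SB _; exact: SB (Rx S SS Sinv) (Ry S SS Sinv).
Qed.

Lemma RDM (x y : K) : RD x -> RD y -> RD (x * y).
Proof.
by move=> Rx Ry S SS Sinv; case: (SS) => _ _ SM; exact: SM (Rx S SS Sinv) (Ry S SS Sinv).
Qed.

Lemma RD_inv_tofrac (d : D) : d != 0 -> RD (d%:F)^-1.
Proof. by move=> d0 S _ Sinv; exact: Sinv. Qed.

Lemma RD0 : RD (0 : K).
Proof. by rewrite -(subrr 1); apply: RDB; exact: RD1. Qed.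

Lemma RDD (x y : K) : RD x -> RD y -> RD (x + y).
Proof. by move=> Rx Ry; rewrite -[y]opprK -[- y]sub0r; apply/RDB/RDB/Ry/RD0. Qed.

Lemma RDX (x : K) n : RD x -> RD (x ^+ n).
Proof.
by move=> Rx; elim: n => [|n IHn]; rewrite ?expr0 ?exprS; [exact: RD1 | exact: RDM].
Qed.

Lemma units0E (c : D) : (c \in @units0 D) = (c \is a GRing.unit) || (c == 0).
Proof. by []. Qed.

Lemma RD_tofrac_units0 (c : D) : c \in @units0 D -> RD c%:F.
Proof.
rewrite units0E => /orP[cU | /eqP->]; last by rewrite tofrac0; exact: RD0.
have cVU : c^-1 \is a GRing.unit by rewrite unitrV.
rewrite -[c]invrK (rmorphV _ cVU); apply: RD_inv_tofrac.
by rewrite invr_eq0; apply: contraTneq cU => ->; rewrite unitr0.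
Qed.

Lemma RD_total_of_tofrac : (forall b : D, RD b%:F) -> forall x : K, RD x.
Proof.
move=> RDb x; have [a [b [b0 ->]]] := fracP x.
by apply: RDM (RDb a) _; exact: RD_inv_tofrac.
Qed.

Lemma RD_total_of_field :
  (forall b : D, b != 0 -> b \is a GRing.unit) -> forall x : K, RD x.
Proof.
move=> D_field; apply: RD_total_of_tofrac => b; apply: RD_tofrac_units0.
by rewrite units0E; have [-> | /D_field ->] := eqVneq b 0; rewrite ?eqxx ?orbT.
Qed.

Definition unit_fraction_sum (x : K) :=
  exists2 s : seq D, all (fun a => a != 0) s & x = \sum_(a <- s) (a%:F)^-1.

Lemma RD_unit_fraction_sum (x : K) : RD x -> unit_fraction_sum x.
Proof.
pose U := [pred y : K | `[< unit_fraction_sum y >]].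
have U1 : 1 \in U.
  by apply/asboolP; exists [:: 1]; rewrite ?big_seq1 ?tofrac1 ?invr1 //= oner_neq0.
have UB : {in U &, forall u v, u - v \in U}.
  move=> _ _ /asboolP[s s0 ->] /asboolP[t t0 ->]; apply/asboolP.
  exists (s ++ map -%R t).
    by rewrite all_cat s0 all_map; apply: sub_all t0 => a; rewrite /= oppr_eq0.
  rewrite big_cat big_map -sumrN; congr (_ + _).
  by apply: eq_bigr => a _; rewrite tofracN invrN.
have UM : {in U &, forall u v, u * v \in U}.
  move=> _ _ /asboolP[s s0 ->] /asboolP[t t0 ->]; apply/asboolP.
  exists [seq a * b | a <- s, b <- t].
    by apply/allP => _ /allpairsP[[a b] [/(allP s0) a0 /(allP t0) b0 ->]]; rewrite mulf_neq0.
  rewrite big_allpairs_dep big_distrlr; apply: eq_bigr => a _.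
  by apply: eq_bigr => b _; rewrite tofracM invfM.
move=> Rx; apply/asboolP; apply: (Rx U) => [|d d0]; first by split.
by apply/asboolP; exists [:: d]; rewrite ?big_seq1 //= d0.
Qed.

End RingOfReciprocals.

Section EuclideanFunction.
Variables (D : idomainType) (f : D -> int).
Hypothesis hf : euclidean_function f.

Lemma euclid_f1_le (b : D) : b != 0 -> f 1 <= f b.
Proof. by move=> b0; have [+ _] := hf (oner_neq0 D) b0; rewrite mul1r. Qed.

Lemma euclid_lt_mul_nonunit (a m : D) :
  a != 0 -> m != 0 -> m \isn't a GRing.unit -> f a < f (a * m).
Proof.
move=> a0 m0 mU.
have [_ [q [r [a_eq r_small]]]] := hf (mulf_neq0 a0 m0) a0.
have r_eq : r = a * (1 - m * q) by rewrite mulrBr mulr1 {1}a_eq mulrA addrC addKr.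
have mq1 : 1 - m * q != 0.
  apply: contraNneq mU => /eqP; rewrite subr_eq0 => /eqP mq1.
  by apply/unitrPr; exists q; rewrite -mq1.
have r0 : r != 0 by rewrite r_eq mulf_neq0.
have [fa_le _] := hf a0 mq1.
by apply: le_lt_trans fa_le _; rewrite -r_eq; case: r_small => // /eqP; rewrite (negPf r0).
Qed.

Lemma euclid_expr_ge (m : D) n :
  m != 0 -> m \isn't a GRing.unit -> f 1 + n%:Z <= f (m ^+ n).
Proof.
move=> m0 mU; elim: n => [|n IHn]; first by rewrite expr0 addr0.
have := euclid_lt_mul_nonunit (expf_neq0 n m0) m0 mU; rewrite -exprSr; lia.
Qed.

Lemma euclid_total (P : D -> Prop) (m : D) :
    m != 0 -> m \isn't a GRing.unit -> P m -> P 1 ->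
    (forall x y, P x -> P y -> P (x - y)) -> (forall x y, P x -> P y -> P (x * y)) ->
    (forall b q, q != 0 -> P (b * q) -> P b) ->
  forall b, P b.
Proof.
move=> m0 mU Pm P1 PB PM Pcancel.
have P0 : P 0 by rewrite -(subrr m); exact: PB.
have PX n : P (m ^+ n) by elim: n => [|n IHn]; rewrite ?expr0 // exprS; exact: PM.
suff Pbelow n b : b != 0 -> f b < f 1 + n%:Z -> P b.
  move=> b; have [-> // | b0] := eqVneq b 0.
  by apply: (Pbelow `|f b - f 1|.+1) => //; have := euclid_f1_le b0; lia.
elim: n b => [|n IHn] b b0 fb; first by have := euclid_f1_le b0; lia.
(* Divide a power of m by b: the remainder is smaller than b, and the quotient is nonzero
   because f (m ^+ N) exceeds f b. *)
set N := `|f b - f 1|%N.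
have [_ [q [r [mN_eq r_small]]]] := hf b0 (expf_neq0 N m0).
have Pr : P r.
  have [-> // | r0] := eqVneq r 0.
  by case: r_small => [/eqP|fr]; [rewrite (negPf r0) | apply: IHn => //; lia].
have q0 : q != 0.
  apply/eqP => q0; move: mN_eq r_small; rewrite q0 mulr0 add0r => <- [mN0 | fmN].
    by move: (expf_neq0 N m0); rewrite mN0 eqxx.
  move: fmN (euclid_expr_ge N m0 mU) (euclid_f1_le b0); rewrite /N; lia.
apply: (Pcancel b q q0).
have -> : b * q = m ^+ N - r by rewrite mN_eq addrK.
exact: PB.
Qed.

Lemma euclid_min (P : D -> Prop) :
  (exists2 b, b != 0 & P b) ->
  exists d, [/\ d != 0, P d & forall b, b != 0 -> P b -> f d <= f b].
Proof.
pose size_is n := `[< exists2 b, b != 0 /\ P b & `|f b - f 1|%N = n >].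
move=> [b b0 Pb]; have size_b : size_is `|f b - f 1|%N by apply/asboolP; exists b.
case: (ex_minnP (ex_intro size_is _ size_b)) => n /asboolP[d [d0 Pd] <-] size_min.
exists d; split=> // c c0 Pc.
have /size_min : size_is `|f c - f 1|%N by apply/asboolP; exists c.
by move: (euclid_f1_le c0) (euclid_f1_le d0); lia.
Qed.

End EuclideanFunction.

Lemma egyptian_greedy (p q L : nat) :
  (0 < p)%N -> (0 < L)%N -> (p * L < q)%N ->
  exists s : seq nat, [/\ uniq s, all (fun n => L < n)%N s &
    p%:R / q%:R = \sum_(n <- s) (n%:R : rat)^-1].
Proof.
have [P] := ubnP p; elim: P p q L => // P IHP p q L pP p0 L0 pLq.
have q_eq := divn_eq q p; set n := (q %/ p)%N in q_eq; set r := (q %% p)%N in q_eq.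
have r_lt : (r < p)%N by rewrite ltn_mod.
have [r0 | r0] := posnP r.
  exists [:: n]; rewrite big_seq1 /= andbT; split=> //.
    by move: pLq; rewrite q_eq r0; nia.
  have n0 : (0 < n)%N by move: pLq; rewrite q_eq r0; nia.
  by rewrite q_eq r0 addn0 natrM; field; rewrite !pnatr_eq0 -!lt0n n0 p0.
have pr_q : ((p - r) * n.+1 < q * n.+1)%N by rewrite ltn_pmul2r //; move: pLq; nia.
have [s [s_uniq s_gt s_eq]] := IHP (p - r)%N _ n.+1 (ltac:(lia)) (ltac:(lia)) isT pr_q.
exists (n.+1 :: s); split.
- by rewrite /= s_uniq andbT; apply/negP => /(allP s_gt); rewrite /= ltnn.
- have Ln : (L < n.+1)%N by move: pLq; rewrite q_eq; nia.
  by rewrite /= Ln; apply: sub_all s_gt => k /=; lia.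
rewrite big_cons -s_eq natrM natrB ?(ltnW r_lt) // q_eq natrD natrM.
have n1 : (n.+1%:R : rat) != 0 by rewrite pnatr_eq0.
have qF : (n%:R * p%:R + r%:R : rat) != 0 by rewrite -natrM -natrD pnatr_eq0 -q_eq; lia.
rewrite -[n.+1]addn1 natrD in n1 *; by field; rewrite qF n1.
Qed.

Lemma harmonic_block_ge (a : nat) : (0 < a)%N ->
  2^-1 <= \sum_(a <= k < a + a) (k%:R : rat)^-1.
Proof.
move=> a0; apply: le_trans (_ : \sum_(a <= k < a + a) ((a + a)%:R : rat)^-1 <= _).
  rewrite sumr_const_nat addnK -mulr_natr natrD.
  by rewrite le_eqVlt; apply/orP; left; apply/eqP; field; rewrite -natrD pnatr_eq0; lia.
rewrite big_nat_cond [leRHS]big_nat_cond; apply: ler_sum => k /andP[/andP[ak ka] _].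
by rewrite lef_pV2 ?posrE ?ltr0n ?ler_nat; lia.
Qed.

Lemma egyptian_one (N : nat) : exists s : seq nat,
  [/\ uniq s, all (fun n => N < n)%N s & \sum_(n <- s) (n%:R : rat)^-1 = 1].
Proof.
wlog N0 : N / (0 < N)%N.
  move=> /(_ N.+1 isT) [s [s_uniq s_gt s_eq]]; exists s; split=> //.
  by apply: sub_all s_gt => n /=; lia.
(* For the least M = M'.+1 with 1 <= H M, the remainder r = 1 - H M' is at most 1 / M', so
   its greedy expansion only uses denominators >= M', which are outside ]N, M'[. *)
pose H M := \sum_(N.+1 <= k < M) (k%:R : rat)^-1.
have H_ge1 : 1 <= H (N.+1 + N.+1 + (N.+1 + N.+1)).
  rewrite /H (@big_cat_nat _ _ _ (N.+1 + N.+1)) /=; [|lia|lia].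
  rewrite [1]splitr; apply: lerD; apply: harmonic_block_ge; lia.
have [M H_M M_min] := ex_minnP (ex_intro (fun M => 1 <= H M) _ H_ge1).
have [M' eM NM'] : exists2 M', M = M'.+1 & (N < M')%N.
  case: (ltnP N.+1 M) => [NM | MN]; first by exists M.-1; lia.
  by move: H_M; rewrite /H big_geq.
have H_M' : H M' < 1 by rewrite ltNge; apply/negP => /M_min; lia.
set r := 1 - H M'.
have r_gt0 : 0 < r by rewrite subr_gt0.
have r_le : r * M'%:R <= 1.
  move: H_M; rewrite eM /H big_nat_recr //= -/(H M') => H_M.
  rewrite -ler_pdivlMr ?ltr0n ?div1r /r; [lra | lia].
set p := `|numq r|%N; set q := `|denq r|%N.
have r_eq : r = p%:R / q%:R.
  by rewrite /p /q !natr_absz !gtr0_norm ?numq_gt0 ?denq_gt0 // divq_num_den.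
have p0 : (0 < p)%N by rewrite absz_gt0 numq_eq0 gt_eqF.
have q0 : (0 < q)%N by rewrite absz_gt0 denq_eq0.
have pM'q : (p * M'.-1 < q)%N.
  suff : (p * M' <= q)%N by nia.
  rewrite -(ler_nat rat) natrM -(ler_pM2r (_ : 0 < q%:R^-1)) ?invr_gt0 ?ltr0n //.
  by rewrite mulrAC -r_eq mulfV ?pnatr_eq0 -?lt0n.
have [s [s_uniq s_gt s_eq]] := egyptian_greedy p0 (ltac:(lia) : (0 < M'.-1)%N) pM'q.
exists (index_iota N.+1 M' ++ s); split.
- rewrite cat_uniq iota_uniq s_uniq andbT /=; apply/hasPn => n /(allP s_gt) /= M'n.
  by rewrite mem_index_iota negb_and -leqNgt; apply/orP; right; lia.
- rewrite all_cat; apply/andP; split; last by apply: sub_all s_gt => n /=; lia.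
  by apply/allP => n; rewrite mem_index_iota; lia.
by rewrite big_cat /= -s_eq -r_eq -/(H M') /r addrC subrK.
Qed.

Lemma sum_inv_natr_pchar0 (F : fieldType) (s : seq nat) :
  [pchar F] =i pred0 -> all (fun n => 0 < n)%N s ->
  \sum_(n <- s) (n%:R : rat)^-1 = 1 -> \sum_(n <- s) (n%:R : F)^-1 = 1.
Proof.
move=> F0 s_gt0 sum_rat; pose L := (\prod_(n <- s) n)%N.
have L_gt0 : (0 < L)%N by rewrite /L big_seq prodn_cond_gt0 // => n; apply/allP.
have scaled (G : fieldType) : [pchar G] =i pred0 ->
    (\sum_(n <- s) (n%:R : G)^-1) * L%:R = (\sum_(n <- s) (L %/ n))%:R.
  move=> /pcharf0P G0; rewrite mulr_suml natr_sum; apply: eq_big_seq => n ns.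
  have n_gt0 : (0 < n)%N := allP s_gt0 n ns.
  by rewrite /L (big_rem _ ns) /= mulKn // natrM mulKf // G0; lia.
apply: (mulIf (_ : L%:R != 0)); first by move/pcharf0P: F0 => ->; lia.
rewrite mul1r scaled //; congr _%:R; apply/eqP.
by rewrite -(eqr_nat rat) -scaled ?sum_rat ?mul1r //; exact: pchar_num.
Qed.

Lemma finite_preimage (A B : eqType) (g : A -> B) (T : seq B) :
  injective g -> exists T' : seq A, forall a, g a \in T -> a \in T'.
Proof.
move=> g_inj; elim: T => [|t T [T' T'P]]; first by exists [::].
have [[a0 <-] | no_preimage] := pselect (exists a, g a = t).
  exists (a0 :: T') => a; rewrite !inE => /orP[/eqP/g_inj-> | /T'P->].
    by rewrite eqxx.
  by rewrite orbT.
exists T' => a; rewrite inE => /orP[/eqP ga | /T'P //].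
by case: no_preimage; exists a.
Qed.

Lemma not_uniq_perm (T : eqType) (s : seq T) :
  ~~ uniq s -> exists a s', perm_eq s [:: a, a & s'].
Proof.
elim: s => [//|x s IHs] /=; rewrite negb_and negbK => /orP[xs | /IHs[a [s' s_perm]]].
  by exists x, (rem x s); rewrite perm_cons perm_to_rem.
exists a, (x :: s'); apply: perm_trans (_ : perm_eq _ [:: x, a, a & s']) _.
  by rewrite perm_cons.
by rewrite -(cat1s x) -(cat1s a) perm_catCA /= perm_cons -(cat1s x) -(cat1s a) perm_catCA.
Qed.

Section EgyptianSums.
Variable D : idomainType.
Local Notation K := {fraction D}.

Lemma pchar0_or_two_eq0_or_unit :
  [pchar D] =i pred0 \/ (2%:R == 0 :> D) || ((2%:R : D) \is a GRing.unit).
Proof.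
have [[p pD] | no_pchar] := pselect (exists p, p \in [pchar D]); last first.
  by left => p; apply/negbTE/negP => pD; apply: no_pchar; exists p.
right; have [p2 | p_odd] := even_prime (pcharf_prime pD).
  by rewrite -p2 (pcharf0 pD) eqxx.
apply/orP; right; apply/unitrPr; exists (p.+1./2)%:R.
by rewrite -natrM mul2n halfK /= p_odd subn0 -addn1 natrD (pcharf0 pD) add0r.
Qed.

Lemma D_egyptian_merge (x : K) :
  (2%:R == 0 :> D) || ((2%:R : D) \is a GRing.unit) ->
  unit_fraction_sum x -> D_egyptian x.
Proof.
move=> two [s]; have [n] := ubnP (size s); elim: n s x => // n IHn s x s_lt s0 ->.
have [s_uniq | /not_uniq_perm[a [s' s_perm]]] := boolP (uniq s); first by exists s.
move: s0; rewrite (perm_all _ s_perm) /= => /and3P[a0 _ s'0].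
have s'_lt : ((size s').+1 < n)%N by move: s_lt; rewrite (perm_size s_perm) /=; lia.
rewrite (perm_big _ s_perm) /= !big_cons addrA -mulr2n -mulr_natl.
have -> : (2%:R : K) = (2%:R : D)%:F by rewrite rmorph_nat.
case/orP: two => [/eqP-> | two_unit].
  by rewrite rmorph0 mul0r add0r; exact: IHn (ltnW s'_lt) s'0 _.
have two0 : (2%:R : D) != 0 by apply: contraTneq two_unit => ->; rewrite unitr0.
have a_half0 : a / 2%:R != 0 by rewrite mulf_neq0 ?invr_eq0.
apply: (IHn (a / 2%:R :: s')) => //=; first by rewrite a_half0.
by rewrite big_cons tofracM (rmorphV _ two_unit) invfM invrK mulrC.
Qed.

(* Avoiding an arbitrary finite set T is what makes these representations closed under
   addition. *)
Definition egyptian_avoiding (T : seq D) (x : K) := exists s : seq D,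
  [/\ uniq s, all (fun a => (a != 0) && (a \notin T)) s & x = \sum_(a <- s) (a%:F)^-1].

Lemma egyptian_avoidingD (x y : K) :
    (forall T, egyptian_avoiding T x) -> (forall T, egyptian_avoiding T y) ->
  forall T, egyptian_avoiding T (x + y).
Proof.
move=> Ex Ey T; have [s [s_uniq sT ->]] := Ex T.
have [t [t_uniq tTs ->]] := Ey (T ++ s).
exists (s ++ t); split; last by rewrite big_cat.
  rewrite cat_uniq s_uniq t_uniq andbT /=; apply/hasPn => a /(allP tTs).
  by rewrite mem_cat negb_or => /and3P[].
rewrite all_cat sT /=; apply: sub_all tTs => a.
by rewrite mem_cat negb_or => /and3P[-> ->].
Qed.

Lemma egyptian_avoiding_inv (a : D) : a != 0 ->
  (forall T, egyptian_avoiding T 1) -> forall T, egyptian_avoiding T (a%:F)^-1.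
Proof.
move=> a0 E1 T; have [T' T'P] := finite_preimage T (mulfI a0).
have [s [s_uniq sT' s_eq]] := E1 T'.
exists (map ( *%R a) s); split.
- by rewrite map_inj_uniq //; exact: mulfI.
- rewrite all_map; apply: sub_all sT' => b /andP[b0 bT'] /=; rewrite mulf_neq0 //=.
  by apply: contra bT' => /T'P.
by rewrite big_map -[LHS]mulr1 s_eq mulr_sumr; apply: eq_bigr => b _; rewrite tofracM invfM.
Qed.

Lemma egyptian_avoiding_unit_fraction_sum (x : K) :
  (forall T, egyptian_avoiding T 1) -> unit_fraction_sum x ->
  forall T, egyptian_avoiding T x.
Proof.
move=> E1 [s]; elim: s x => [|a s IHs] x /=; first by move=> _ -> T; exists [::].
case/andP=> a0 s0 ->; rewrite big_cons; apply: egyptian_avoidingD.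
  exact: egyptian_avoiding_inv.
exact: IHs.
Qed.

Lemma egyptian_avoiding_one_pchar0 :
  [pchar D] =i pred0 -> forall T, egyptian_avoiding T 1.
Proof.
move=> /pcharf0P D0 T.
have natr_inj : injective (fun n : nat => n%:R : D).
  move=> m n /= /eqP; wlog le_mn : m n / (m <= n)%N => [hwlog|].
    by case: (leqP m n) => [/hwlog// | /ltnW/hwlog]; rewrite eq_sym => nm /nm.
  rewrite eq_sym -subr_eq0 -natrB // D0 subn_eq0 => nm.
  by apply/eqP; rewrite eqn_leq le_mn.
have [T' T'P] := finite_preimage T natr_inj.
have [s [s_uniq s_gt s_eq]] := egyptian_one (\max_(n <- T') n).
have s_gt0 : all (fun n => 0 < n)%N s by apply: sub_all s_gt => n; apply: leq_ltn_trans.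
exists (map (fun n : nat => n%:R) s); split.
- by rewrite map_inj_uniq.
- rewrite all_map; apply/allP => n ns /=; rewrite D0 -lt0n (allP s_gt0) //=.
  apply: contraTN (allP s_gt n ns) => /T'P nT'; rewrite -leqNgt.
  exact: (@leq_bigmax_seq _ _ xpredT (fun n => n) _ nT' isT).
rewrite big_map; under eq_bigr do rewrite rmorph_nat; symmetry.
apply: sum_inv_natr_pchar0 s_gt0 s_eq; apply/pcharf0P => n.
by rewrite -(rmorph_nat (@FracField.tofrac D)) tofrac_eq0 D0.
Qed.

Lemma D_egyptian_unit_fraction_sum (x : K) : unit_fraction_sum x -> D_egyptian x.
Proof.
case: pchar0_or_two_eq0_or_unit => [D0 | two]; last exact: D_egyptian_merge.
move=> /(egyptian_avoiding_unit_fraction_sum (egyptian_avoiding_one_pchar0 D0)).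
move=> /(_ [::])[s [s_uniq s0 ->]]; exists s; split=> //; split=> //.
by apply: sub_all s0 => a /andP[].
Qed.

Lemma egyptian_of_RD_total : (forall x : K, RD x) -> egyptian D.
Proof. by move=> RDT x _; apply/D_egyptian_unit_fraction_sum/RD_unit_fraction_sum. Qed.

End EgyptianSums.

Lemma RD_total_of_nonunit (D : idomainType) (f : D -> int) (m : D) :
    euclidean_function f -> m != 0 -> m \isn't a GRing.unit -> RD m%:F ->
  forall x : {fraction D}, RD x.
Proof.
move=> hf m0 mU RDm; apply: RD_total_of_tofrac.
apply: (euclid_total hf m0 mU) => // [|x y|x y|b q q0 RDbq].
- by rewrite tofrac1; exact: RD1.
- by rewrite tofracB; exact: RDB.
- by rewrite tofracM; exact: RDM.
have -> : b%:F = (b * q)%:F * (q%:F)^-1 by rewrite tofracM mulfK ?tofrac_eq0.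
by apply: RDM RDbq _; exact: RD_inv_tofrac.
Qed.

Lemma units0_divring_closed (D : idomainType) :
    (forall m : D, m != 0 -> RD m%:F -> m \is a GRing.unit) ->
  GRing.divring_closed (@units0 D).
Proof.
move=> RD_unit; split; first by rewrite units0E unitr1.
  move=> u v u0 v0; rewrite units0E; have [_ | uv0] := eqVneq (u - v) 0.
    by rewrite orbT.
  by rewrite RD_unit // tofracB; apply: RDB; exact: RD_tofrac_units0.
move=> u v; rewrite !units0E => /orP[uU | /eqP->] /orP[vU | /eqP->];
  rewrite ?invr0 ?mulr0 ?mul0r ?eqxx ?orbT //.
by rewrite unitrM uU unitrV vU.
Qed.

Section DiscreteValuationRing.
Variables (K : fieldType) (R : K -> Prop).
Hypotheses (R0 : R 0) (R1 : R 1).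
Hypothesis Radd : forall x y, R x -> R y -> R (x + y).
Hypothesis Rmul : forall x y, R x -> R y -> R (x * y).

Definition R_unit (u : K) := [/\ u != 0, R u & R u^-1].

Lemma R_unit1 : R_unit 1.
Proof. by split; rewrite ?oner_neq0 ?invr1. Qed.

Lemma R_unitM (u w : K) : R_unit u -> R_unit w -> R_unit (u * w).
Proof.
by move=> [u0 Ru RuV] [w0 Rw RwV]; split; rewrite ?invfM ?mulf_neq0 //; exact: Rmul.
Qed.

Lemma R_unitV (u : K) : R_unit u -> R_unit u^-1.
Proof. by move=> [u0 Ru RuV]; split; rewrite ?invrK ?invr_eq0. Qed.

Variable p : K.
Hypotheses (Rp : R p) (RpV : ~ R p^-1).

Lemma uniformizer_neq0 : p != 0.
Proof. by apply: contraPneq RpV => ->; rewrite invr0. Qed.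

Definition unit_power (x : K) := exists (k : int) u, R_unit u /\ x = u * p ^ k.

Lemma unit_powerM (x y : K) : unit_power x -> unit_power y -> unit_power (x * y).
Proof.
move=> [k [u [Uu ->]]] [l [w [Uw ->]]]; exists (k + l), (u * w); split; first exact: R_unitM.
by rewrite expfzDr ?uniformizer_neq0 // mulrACA.
Qed.

Lemma unit_powerV (x : K) : unit_power x -> unit_power x^-1.
Proof.
move=> [k [u [Uu ->]]]; exists (- k), u^-1; split; first exact: R_unitV.
by rewrite invfM invr_expz.
Qed.

Hypothesis unit_powerT : forall x, x != 0 -> unit_power x.

Lemma R_expr (n : nat) : R (p ^+ n).
Proof. by elim: n => [|n IHn]; rewrite ?expr0 // exprS; exact: Rmul. Qed.

Lemma R_unit_mul_expz_ge0 (u : K) (k : int) : R_unit u -> R (u * p ^ k) -> 0 <= k.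
Proof.
case: k => // n [u0 _ RuV] Rupk; case: RpV.
have p0 := uniformizer_neq0.
have -> : p^-1 = u^-1 * (u * (p ^+ n.+1)^-1) * p ^+ n.
  by rewrite exprS; field; rewrite u0 p0 expf_neq0.
by apply: Rmul (R_expr n); exact: Rmul RuV Rupk.
Qed.

Lemma R_unit_mul_expz (u : K) (k : int) : R_unit u -> 0 <= k -> R (u * p ^ k).
Proof. by case: k => // n [_ Ru _] _; exact: Rmul Ru (R_expr n). Qed.

Lemma expz_le_of_unit_eq (u w : K) (k l : int) :
  R_unit u -> R_unit w -> u * p ^ k = w * p ^ l -> l <= k.
Proof.
move=> Uu Uw eq_kl; rewrite -subr_ge0.
apply: R_unit_mul_expz_ge0 (R_unitM Uu (R_unitV Uw)) _.
have [w0 _ _] := Uw; have p0 := uniformizer_neq0.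
by rewrite expfzDr // -invr_expz -mulrACA -invfM eq_kl divff ?mulf_neq0 ?expfz_neq0.
Qed.

Definition valuation (x : K) : int :=
  if pselect (unit_power x) is left ex then sval (cid ex) else 0.

Lemma valuationP (x : K) :
  x != 0 -> exists2 u, R_unit u & x = u * p ^ valuation x.
Proof.
move=> x0; rewrite /valuation; case: pselect => [ex | []]; last exact: unit_powerT.
by case: (cid ex) => k [u [Uu xE]] /=; exists u.
Qed.

Lemma valuation_unique (x u : K) (k : int) :
  R_unit u -> x = u * p ^ k -> valuation x = k.
Proof.
move=> Uu xE; have x0 : x != 0.
  by case: Uu => u0 _ _; rewrite xE mulf_neq0 ?expfz_neq0 ?uniformizer_neq0.
have [w Uw xE'] := valuationP x0.
apply/eqP; rewrite eq_le (expz_le_of_unit_eq Uu Uw) -?xE //.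
by rewrite (expz_le_of_unit_eq Uw Uu) -?xE'.
Qed.

Lemma is_DVR_in_uniformizer : is_DVR_in R.
Proof.
have p0 := uniformizer_neq0.
exists valuation; split; first split.
- move=> x y x0 y0; have [u Uu xE] := valuationP x0; have [w Uw yE] := valuationP y0.
  by apply: valuation_unique (R_unitM Uu Uw) _; rewrite {1}xE {1}yE expfzDr // mulrACA.
- move=> x y x0 y0 xy0; set m := Num.min (valuation x) (valuation y).
  have [u Uu xE] := valuationP x0; have [w Uw yE] := valuationP y0.
  have [e Ue xyE] := valuationP xy0.
  rewrite -subr_ge0; apply: R_unit_mul_expz_ge0 Ue _.
  have -> : e * p ^ (valuation (x + y) - m) =
            u * p ^ (valuation x - m) + w * p ^ (valuation y - m).
    by rewrite !expfzDr // !mulrA -xyE -xE -yE mulrDl.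
  by apply: Radd; apply: R_unit_mul_expz; rewrite // subr_ge0 ge_min lexx ?orbT.
- move=> n; exists (p ^ n); first exact: expfz_neq0.
  by apply: valuation_unique R_unit1 _; rewrite mul1r.
move=> x; have [-> | x0] := eqVneq x 0; first by split=> // _; left.
have [u Uu xE] := valuationP x0; split=> [Rx | [-> // | v_ge0]].
  by right; apply: R_unit_mul_expz_ge0 Uu _; rewrite -xE.
by rewrite xE; exact: R_unit_mul_expz.
Qed.

End DiscreteValuationRing.

Lemma exprS_div_step (F : fieldType) (b c d q : F) (k : nat) :
  b != 0 -> q != 0 -> b = d * q + c -> d ^+ k.+1 / b = d ^+ k / q * (1 - c / b).
Proof.
move=> b0 q0 b_eq; have -> : 1 - c / b = d * q / b by rewrite b_eq; field; rewrite -b_eq.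
by rewrite exprS; field; rewrite b0 q0.
Qed.

Section UniversalSideDivisor.
Variables (D : idomainType) (f : D -> int).
Hypothesis hf : euclidean_function f.
Hypothesis RD_tofrac_unit : forall m : D, m != 0 -> RD m%:F -> m \is a GRing.unit.
Variable d : D.
Hypotheses (d0 : d != 0) (dU : d \isn't a GRing.unit).
Hypothesis d_min : forall b, b != 0 -> b \isn't a GRing.unit -> f d <= f b.
Local Notation K := {fraction D}.
Local Notation pi := (d%:F)^-1.

Lemma euclid_rem_units0 (b : D) : exists q c, b = d * q + c /\ c \in @units0 D.
Proof.
have [-> | b0] := eqVneq b 0; first by exists 0, 0; rewrite mulr0 addr0 units0E eqxx orbT.
have [_ [q [c [b_eq c_small]]]] := hf d0 b0.
exists q, c; split=> //; rewrite units0E; have [_ | c0] := eqVneq c 0; first by rewrite orbT.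
rewrite orbF; apply: contraT => cU; move: (d_min c0 cU).
by case: c_small => [/eqP | fc]; [rewrite (negPf c0) | rewrite leNgt fc].
Qed.

Lemma RD_tofrac_mul_invX (b : D) : exists n, RD (b%:F * pi ^+ n).
Proof.
pose P b := exists n, RD (b%:F * pi ^+ n).
have RD_pi : RD pi := RD_inv_tofrac d0.
have P_shift x n k : RD (x * pi ^+ n) -> RD (x * pi ^+ (n + k)).
  by move=> Rx; rewrite exprD mulrA; apply: RDM Rx (RDX k RD_pi).
apply: (euclid_total hf d0 dU (P := P)) => {b}
  [||x y [n Rx] [k Ry]|x y [n Rx] [k Ry]|b q q0 [n Rbq]].
- by exists 1%N; rewrite expr1 mulfV ?tofrac_eq0 //; exact: RD1.
- by exists 0%N; rewrite tofrac1 mulr1; exact: RD1.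
- exists (n + k)%N; rewrite tofracB mulrBl; apply: RDB; first exact: P_shift.
  by rewrite addnC; exact: P_shift.
- by exists (n + k)%N; rewrite tofracM exprD mulrACA; exact: RDM.
exists n; have -> : b%:F * pi ^+ n = (b * q)%:F * pi ^+ n * (q%:F)^-1.
  by rewrite tofracM mulrAC mulfK ?tofrac_eq0.
by apply: RDM Rbq _; exact: RD_inv_tofrac.
Qed.

Local Notation RD_unit := (R_unit (@RD D)).

Lemma RD_unit_tofrac (b : D) : b != 0 -> RD b%:F -> RD_unit b%:F.
Proof. by move=> b0 Rb; split; rewrite ?tofrac_eq0 //; exact: RD_inv_tofrac. Qed.

Lemma RD_unit_tofrac_mul_invX (n : nat) (b : D) :
  b != 0 -> RD (b%:F * pi ^+ n) -> exists k, RD_unit (b%:F * pi ^+ k).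
Proof.
have RD_pi : RD pi := RD_inv_tofrac d0.
have dF0 : d%:F != 0 by rewrite tofrac_eq0.
have d_pi : d%:F * pi = 1 := mulfV dF0.
elim: n b => [|n IHn] b b0 Rb.
  by exists 0%N; rewrite expr0 mulr1 in Rb *; exact: RD_unit_tofrac.
have [q [c [b_eq c_units0]]] := euclid_rem_units0 b.
have Rc := RD_tofrac_units0 c_units0.
have bF : b%:F = d%:F * q%:F + c%:F by rewrite b_eq tofracD tofracM.
have [q0 | q_neq0] := eqVneq q 0.
  exists 0%N; rewrite expr0 mulr1; apply: RD_unit_tofrac => //.
  by rewrite bF q0 tofrac0 mulr0 add0r.
have Rq : RD (q%:F * pi ^+ n).
  have -> : q%:F * pi ^+ n = b%:F * pi ^+ n.+1 - c%:F * pi ^+ n.+1.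
    by rewrite bF exprS mulrDl addrK mulrACA d_pi mul1r.
  by apply: RDB Rb (RDM Rc (RDX _ RD_pi)).
have [k [_ Rqk Rqk']] := IHn q q_neq0 Rq.
exists k.+1; split.
- by rewrite mulf_neq0 ?expf_neq0 ?invr_eq0 ?tofrac_eq0.
- have -> : b%:F * pi ^+ k.+1 = q%:F * pi ^+ k + c%:F * pi ^+ k.+1.
    by rewrite bF exprS mulrDl mulrACA d_pi mul1r.
  by apply: RDD Rqk (RDM Rc (RDX _ RD_pi)).
move: Rqk'; rewrite !invfM !exprVn !invrK ![_^-1 * _]mulrC.
rewrite (exprS_div_step k _ _ bF) ?tofrac_eq0 // => Rqk'.
apply: RDM Rqk' _; apply: RDB; first exact: RD1.
exact: RDM Rc (RD_inv_tofrac b0).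
Qed.

Lemma notRD_inv_pi : ~ RD pi^-1.
Proof. by rewrite invrK => /(RD_tofrac_unit d0); apply/negP. Qed.

Lemma RD_unit_power (x : K) : x != 0 -> unit_power (@RD D) pi x.
Proof.
have pi0 : pi != 0 by rewrite invr_eq0 tofrac_eq0.
have tofrac_unit_power b : b != 0 -> unit_power (@RD D) pi b%:F.
  move=> b0; have [n Rbn] := RD_tofrac_mul_invX b.
  have [k Ubk] := RD_unit_tofrac_mul_invX b0 Rbn.
  exists (- k%:Z), (b%:F * pi ^+ k); split=> //.
  by rewrite -invr_expz -exprnP mulfK // expf_neq0.
move=> x0; have [a [b [b0 x_eq]]] := fracP x.
have a0 : a != 0 by apply: contraNneq x0 => a0; rewrite x_eq a0 tofrac0 mul0r.
rewrite x_eq; apply: (@unit_powerM _ (@RD D) (@RD0 D) (@RDM D) _ notRD_inv_pi).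
  exact: tofrac_unit_power.
by apply: unit_powerV; exact: tofrac_unit_power.
Qed.

Lemma RD_is_DVR : is_DVR_in (@RD D).
Proof.
exact: (@is_DVR_in_uniformizer _ (@RD D) (@RD0 D) (@RD1 D) (@RDD D) (@RDM D) _
  (RD_inv_tofrac d0) notRD_inv_pi RD_unit_power).
Qed.

End UniversalSideDivisor.

Unset Implicit Arguments.
Theorem theorem2p10 (D : idomainType) :
  is_euclidean D -> ~ egyptian D ->
  is_DVR_in (@RD D) /\ GRing.divring_closed (@units0 D).
Proof.
move=> [f hf] not_egyptian.
have RD_tofrac_unit (m : D) : m != 0 -> RD m%:F -> m \is a GRing.unit.
  move=> m0 Rm; apply: contrapT => /negP mU; apply: not_egyptian.
  exact/egyptian_of_RD_total/(RD_total_of_nonunit hf m0 mU Rm).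
have [b b0 bU] : exists2 b : D, b != 0 & b \isn't a GRing.unit.
  apply: contrapT => D_field; apply/not_egyptian/egyptian_of_RD_total/RD_total_of_field.
  by move=> b b0; apply: contrapT => /negP bU; apply: D_field; exists b.
have [d [d0 dU d_min]] :=
  euclid_min hf (P := fun b => b \isn't a GRing.unit) (ex_intro2 _ _ b b0 bU).
split; first exact: (RD_is_DVR hf RD_tofrac_unit d0 dU d_min).
exact: units0_divring_closed.
Qed.
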